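(* Let $N_t$ be a simple point process on $[0,\infty)$ with $N_0=0$, arrival times $0<\tau_1<\tau_2<\cdots$ and inter-arrival times $T_i=\tau_i-\tau_{i-1}$ ($\tau_0=0$). Let $p>0$ and let i.i.d. claims $C_i$ be given, and suppose Assumption A1 holds. Then for any fixed $\epsilon,\epsilon'>0$ there exists a constant $M>0$ such that $$\mathbb{P}\left(\bigcap_{n=1}^{\infty}\left\{p\sum_{i=1}^{n}T_i\le n\left(\frac{p}{\mu}+\epsilon\right)+M\right\}\right)>1-\epsilon'.$$
   Context: Assumption A1: (i) $(N_t/t\in\cdot)$ satisfies a large deviation principle (as $t\to\infty$) with a rate function $I$ such that $I(x)=0$ if and only if $x=\mu$ (for some $\mu>0$); (ii) $I$ is increasing on $[\mu,\infty)$ and decreasing on $[0,\mu]$; (iii) the net profit condition $\rho:=\mu\mathbb{E}[C_1]/p<1$ holds; (iv) there exists $\theta>0$ such that $\mathbb{E}[e^{\theta\sum_{i=1}^n T_i}]<\infty$ for every $n\in\mathbb{N}$. Here $C_i$ are i.i.d. nonnegative claim sizes with finite mean, independent of $N$, and $p>0$ is the premium rate. *)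

From HB Require Import structures.
From mathcomp Require Import all_boot all_order all_algebra.
From mathcomp Require Import all_classical all_reals all_analysis.
Set Implicit Arguments. Unset Strict Implicit. Unset Printing Implicit Defensive.
Import Order.TTheory GRing.Theory Num.Theory.
Import numFieldNormedType.Exports.
Local Open Scope classical_set_scope.
Local Open Scope ring_scope.

Section Defs.
Context {d : measure_display} {T : measurableType d} {R : realType}.
Variable P : probability T R.

(* arrival time tau_n = T_1 + ... + T_n  (tau_0 = 0); index 0 of Tm unused *)
Definition arrival (Tm : nat -> T -> R) (n : nat) (w : T) : R :=
  \sum_(1 <= i < n.+1) Tm i w.

(* Simple point process N on [0,oo) with N_0 = 0, inter-arrival times Tm i
   (i >= 1), arrival times 0 < tau_1 < tau_2 < ...:
   N_t(w) = #{n >= 1 | tau_n(w) <= t}, i.e. N_t >= n  <->  tau_n <= t. *)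
Definition simple_point_process (N : R -> T -> nat) (Tm : nat -> T -> R) : Prop :=
  [/\ (forall i, measurable_fun setT (Tm i)),
      (forall i w, 0 < Tm i.+1 w),
      (forall w, N 0 w = 0%N) &
      (forall t w n, (n.+1 <= N t w)%N <-> arrival Tm n.+1 w <= t)].

Definition mutually_independent (X : nat -> T -> R) : Prop :=
  forall (s : seq nat) (B : nat -> set R), uniq s ->
    (forall i, measurable (B i)) ->
    P (\big[setI/setT]_(i <- s) (X i @^-1` B i)) =
    (\prod_(i <- s) P (X i @^-1` B i))%E.

Definition identically_distributed (X : nat -> T -> R) : Prop :=
  forall i (B : set R), measurable B ->
    P (X i.+1 @^-1` B) = P (X 1%N @^-1` B).

Definition independent_of_process (X : nat -> T -> R) (N : R -> T -> nat) : Prop :=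
  forall (s : seq nat) (B : nat -> set R) (u : seq R) (A : R -> set nat),
    (forall i, measurable (B i)) ->
    let EX := \big[setI/setT]_(i <- s) (X i @^-1` B i) in
    let EN := \big[setI/setT]_(t <- u) (N t @^-1` A t) in
    P (EX `&` EN) = (P EX * P EN)%E.

Definition rate_function (I : R -> \bar R) : Prop :=
  (forall x, (0 <= I x)%E) /\ (forall a : R, closed [set x | (I x <= a%:E)%E]).

Definition inf_over (I : R -> \bar R) (A : set R) : \bar R := ereal_inf (I @` A).

(* Large deviation principle for (N_t / t) as t -> +oo with rate function I:
     limsup_t (1/t) log P(N_t/t in F) <= - inf_F I   (F closed)
     liminf_t (1/t) log P(N_t/t in G) >= - inf_G I   (G open)
   written out: limsup f <= L iff for all c > L, eventually f < c, etc. *)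
Definition LDP (N : R -> T -> nat) (I : R -> \bar R) : Prop :=
  [/\ rate_function I,
      (forall F : set R, closed F -> forall g : R, (g%:E < inf_over I F)%E ->
         \forall t \near +oo,
           (P [set w | F ((N t w)%:R / t)%R] < (expR (- (g * t))%R)%:E)%E) &
      (forall G : set R, open G -> forall g : R, (inf_over I G < g%:E)%E ->
         \forall t \near +oo,
           ((expR (- (g * t))%R)%:E < P [set w | G ((N t w)%:R / t)%R])%E)].

Definition assumption_A1 (N : R -> T -> nat) (Tm : nat -> T -> R)
  (C : nat -> T -> R) (p mu : R) : Prop :=
  [/\ 0 < mu,
      exists I : R -> \bar R,
        [/\ LDP N I,
            (forall x, I x = 0%E <-> x = mu),
            (forall x y, mu <= x -> x <= y -> (I x <= I y)%E) &
            (forall x y, 0 <= x -> x <= y -> y <= mu -> (I y <= I x)%E)],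
      (* (iii) net profit condition rho = mu E[C_1] / p < 1 *)
      (mu%:E * \int[P]_w (C 1%N w)%:E < p%:E)%E &
      exists theta : R, 0 < theta /\
        forall n : nat, (\int[P]_w (expR (theta * arrival Tm n w))%:E < +oo)%E].

End Defs.

From HB Require Import structures.
From mathcomp Require Import all_boot all_order all_algebra.
From mathcomp Require Import all_classical all_reals all_analysis.
From mathcomp Require Import ring lra.
From mathcomp Require Import measurable_realfun.
Set Implicit Arguments. Unset Strict Implicit. Unset Printing Implicit Defensive.
Import Order.TTheory GRing.Theory Num.Theory.
Import numFieldNormedType.Exports.
Local Open Scope classical_set_scope.
Local Open Scope ring_scope.

(* With a := 1/mu + eps/p we have 1/a < mu, so I is positive on [0, 1/a] and the
   upper LDP bound makes P(N_t <= t/a) decay like exp(-g t) for some g > 0.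
   Since tau_{n+1} > t forces N_t <= n, the event tau_{n+1} > (n+1) a + m has
   probability at most exp(-g m) r^n with r := exp(-g a) < 1; summing the
   geometric series and taking m large bounds the union of these events by eps'.
   Multiplying by p gives the claim with M := p m. *)

Section counting_process.
Context d (T : measurableType d) (R : realType).
Variables (N : R -> T -> nat) (Tm : nat -> T -> R).
Hypothesis hN : simple_point_process N Tm.

Lemma measurable_arrival n : measurable_fun setT (arrival Tm n).
Proof. by case: hN => mTm _ _ _; apply: measurable_sum => i; exact: mTm. Qed.

Lemma measurable_count_ge t k : measurable [set w | (k <= N t w)%N].
Proof.
case: k => [|k]; first by rewrite (_ : [set _ | _] = setT) //; exact/seteqP.
case: hN => _ _ _ NE.
rewrite (_ : [set _ | _] = [set w | arrival Tm k.+1 w <= t]); last first.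
  by apply/seteqP; split => w /NE.
rewrite -[X in measurable X]setTI.
exact: (measurable_fun_ler (measurable_arrival _) (measurable_cst t))
  measurableT [set true] I.
Qed.

Lemma measurable_count_le t (y : R) : measurable [set w | (N t w)%:R <= y].
Proof.
rewrite (_ : [set _ | _] =
  \bigcap_(k in [set k : nat | y < k%:R :> R]) ~` [set w | (k <= N t w)%N]).
  by apply: bigcap_measurableType => k _; exact/measurableC/measurable_count_ge.
apply/seteqP; split => w /=.
  by move=> Nty k ykn; apply/negP; rewrite -(ler_nat R) -ltNge (le_lt_trans Nty).
move=> N_lt; rewrite leNgt; apply/negP => y_lt.
by apply: (N_lt (N t w)) => //=.
Qed.

Lemma count_le_of_arrival_lt t n w : t < arrival Tm n.+1 w -> (N t w <= n)%N.
Proof.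
case: hN => _ _ _ NE tlt; rewrite leqNgt; apply/negP => /NE.
by rewrite leNgt tlt.
Qed.

End counting_process.

Lemma measure_bigcup_geometric d (T : measurableType d) (R : realType)
    (mu : {measure set T -> \bar R}) (B : (set T)^nat) (c r : R) :
  (forall n, measurable (B n)) -> 0 <= c -> 0 < r -> r < 1 ->
  (forall n, (mu (B n) <= (c * r ^+ n)%:E)%E) ->
  (mu (\bigcup_n B n) <= (c / (1 - r))%:E)%E.
Proof.
move=> mB c0 r0 r1 muB.
apply: (le_trans (measure_sigma_subadditive _ mB (bigcupT_measurable _ mB) _)) => //.
apply: lime_le; first exact: is_cvg_nneseries.
apply: nearW => k /=.
apply: le_trans; first by apply: lee_sum => i _; exact: muB.
rewrite sumEFin lee_fin.
by apply: geometric_le_lim; rewrite // gtr0_norm.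
Qed.

Lemma expR_neg_lt_near (R : realType) (g c : R) : 0 < g -> 0 < c ->
  \forall m \near +oo, expR (- (g * m)) < c.
Proof.
move=> g0 c0; near=> m.
rewrite -[c]lnK ?posrE // ltr_expR ltrNl -ltr_pdivrMl //.
near: m; exact: nbhs_pinfty_gt (num_real _).
Unshelve. all: by end_near. Qed.

Lemma ereal_gt0_exists_lt (R : realType) (e : \bar R) : (0 < e)%E ->
  exists2 g : R, 0 < g & (g%:E < e)%E.
Proof.
case: e => [r | | ] //=; last by exists 1 => //; exact: ltry.
rewrite lte_fin => r0; exists (r / 2); first by rewrite divr_gt0.
by rewrite lte_fin; lra.
Qed.

Lemma LDP_count_lower_tail d (T : measurableType d) (R : realType)
    (P : probability T R) (N : R -> T -> nat) (I : R -> \bar R) (mu x : R) :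
  LDP P N I -> (forall y, I y = 0%E <-> y = mu) ->
  (forall y z, 0 <= y -> y <= z -> z <= mu -> (I z <= I y)%E) ->
  0 <= x -> x < mu ->
  exists2 g : R, 0 < g & \forall t \near +oo,
    (P [set w | ((N t w)%:R <= x * t)%R] < (expR (- (g * t)))%:E)%E.
Proof.
case=> [[I_ge0 _] upper _] I_eq0 I_decr x0 xmu.
have Ix_gt0 : (0 < I x)%E.
  rewrite lt_neqAle I_ge0 andbT; apply/negP => /eqP/esym/I_eq0 xE.
  by move: xmu; rewrite xE ltxx.
have [g g0 gIx] := ereal_gt0_exists_lt Ix_gt0.
exists g => //.
have g_inf : (g%:E < inf_over I `[0%R, x]%classic)%E.
  apply: (lt_le_trans gIx); apply: le_ereal_inf_tmp => _ [z + <-].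
  by rewrite /= in_itv /= => /andP[z0 zx]; apply: I_decr => //; exact: ltW.
have F_closed : closed `[0%R, x]%classic by exact: interval_closed.
have tail := upper _ F_closed g g_inf.
near=> t.
have t0 : 0 < t by near: t; exact: nbhs_pinfty_gt (num_real 0).
rewrite (_ : [set w | _] = [set w | `[0%R, x]%classic ((N t w)%:R / t)]); last first.
  apply/seteqP; split => w /=; rewrite in_itv /= ler_pdivrMr //.
    by move=> ->; rewrite andbT divr_ge0 // ltW.
  by case/andP.
by near: t.
Unshelve. all: by end_near. Qed.

Lemma arrival_linear_bound d (T : measurableType d) (R : realType)
    (P : probability T R) (N : R -> T -> nat) (Tm : nat -> T -> R) (a g : R) :
  simple_point_process N Tm -> 0 < a -> 0 < g ->
  (\forall t \near +oo,
     (P [set w | ((N t w)%:R <= a^-1 * t)%R] < (expR (- (g * t)))%:E)%E) ->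
  forall eps', 0 < eps' -> exists2 m : R, 0 < m &
    ((1 - eps')%:E <
       P (\bigcap_n [set w | (arrival Tm n.+1 w <= n.+1%:R * a + m)%R]))%E.
Proof.
move=> hN a0 g0 [t0 [_ tail]] eps' eps'0.
pose r := expR (- (g * a)).
have r0 : 0 < r by exact: expR_gt0.
have r1 : r < 1 by rewrite expR_lt1 oppr_lt0 mulr_gt0.
have [m [t0m m0 em]] :
    exists m : R, [/\ t0 < m, 0 < m & expR (- (g * m)) < eps' * (1 - r)].
  near (pinfty_nbhs R) => m; exists m; split; near: m.
  - exact: nbhs_pinfty_gt (num_real _).
  - exact: nbhs_pinfty_gt (num_real _).
  - by apply: expR_neg_lt_near; rewrite // mulr_gt0 // subr_gt0.
exists m => //.
pose tn n := n.+1%:R * a + m.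
have m_le_tn n : m <= tn n by rewrite lerDr mulr_ge0 // ltW.
pose B n := [set w | tn n < arrival Tm n.+1 w].
have mB n : measurable (B n).
  rewrite -[X in measurable X]setTI.
  exact: (measurable_fun_ltr (measurable_cst _) (measurable_arrival hN _))
    measurableT [set true] I.
have PB n : (P (B n) <= (expR (- (g * m)) * r ^+ n)%:E)%E.
  have tn0 : 0 < tn n by exact: lt_le_trans m0 (m_le_tn n).
  have B_sub : B n `<=` [set w | ((N (tn n) w)%:R <= a^-1 * tn n)%R].
    move=> w /(count_le_of_arrival_lt hN) Nn /=.
    have -> : a^-1 * tn n = n.+1%:R + m / a by rewrite /tn; field; rewrite gt_eqF.
    by rewrite (@le_trans _ _ n.+1%:R) ?ler_nat ?leqW // lerDl divr_ge0 // ltW.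
  apply: (le_trans (le_measure _ _ _ B_sub)); rewrite ?inE //.
    exact: (measurable_count_le hN (tn n) (a^-1 * tn n)).
  apply: (le_trans (ltW (tail _ (lt_le_trans t0m (m_le_tn n))))); rewrite lee_fin.
  have -> : - (g * tn n) = - (g * m) + n.+1%:R * (- (g * a)) by rewrite /tn; ring.
  rewrite expRD expRM_natl -/r ler_pM2l ?expR_gt0 // exprS.
  by rewrite ler_piMl // ?exprn_ge0 // ltW.
have PU : (P (\bigcup_n B n) < eps'%:E)%E.
  apply: le_lt_trans (measure_bigcup_geometric mB (expR_ge0 _) r0 r1 PB) _.
  by rewrite lte_fin ltr_pdivrMr ?subr_gt0.
rewrite (_ : \bigcap_n _ = ~` \bigcup_n B n); last first.
  by rewrite setC_bigcup; apply: eq_bigcapr => n _; apply/seteqP; split => w /=;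
    rewrite leNgt => /negP.
rewrite probability_setC; last exact: bigcupT_measurable.
move: PU; rewrite -(fineK (fin_num_measure _ _ (bigcupT_measurable _ mB))).
by rewrite !lte_fin; lra.
Unshelve. all: by end_near. Qed.

Theorem lemma1 (d : measure_display) (T : measurableType d) (R : realType)
  (P : probability T R) (N : R -> T -> nat) (Tm : nat -> T -> R)
  (C : nat -> T -> R) (p mu : R) :
  simple_point_process N Tm ->
  0 < p ->
  (forall i, measurable_fun setT (C i)) ->
  mutually_independent P C ->
  identically_distributed P C ->
  (forall i w, 0 <= C i w) ->
  P.-integrable setT (fun w => (C 1%N w)%:E) ->
  independent_of_process P C N ->
  assumption_A1 P N Tm C p mu ->
  forall eps eps' : R, 0 < eps -> 0 < eps' ->
  exists M : R, 0 < M /\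
    ((1 - eps')%:E <
      P (\bigcap_n [set w | (p * arrival Tm n.+1 w
                            <= n.+1%:R * (p / mu + eps) + M)%R]))%E.
Proof.
move=> hN p0 _ _ _ _ _ _ [mu0 [I [ldp I_eq0 _ I_decr]] _ _] eps eps' eps0 eps'0.
pose a := mu^-1 + eps / p.
have a0 : 0 < a by rewrite addr_gt0 ?invr_gt0 ?divr_gt0.
have a_mu : a^-1 < mu.
  by rewrite -[X in _ < X]invrK ltf_pV2 ?posrE ?invr_gt0 // ltrDl divr_gt0.
have a_inv0 : 0 <= a^-1 by rewrite invr_ge0 ltW.
have [g g0 tail] := LDP_count_lower_tail ldp I_eq0 I_decr a_inv0 a_mu.
have [m m0 bound] := arrival_linear_bound hN a0 g0 tail eps'0.
exists (p * m); split; first exact: mulr_gt0.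
congr (_ < P _)%E: bound; apply: eq_bigcapr => n _; apply/seteqP.
have -> : n.+1%:R * (p / mu + eps) + p * m = p * (n.+1%:R * a + m).
  by rewrite /a; field; rewrite !gt_eqF.
by split => w /=; rewrite ler_pM2l.
Qed.
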